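(* Let $Z\sim N(0,1)$ and let $x=(x_1,\ldots,x_n)$ be a vector of i.i.d. symmetric Bernoulli random variables (taking values $\pm1$ with probability $1/2$ each). Fix $u\in S^{n-1}$ and let $X=\langle u,x\rangle$. Then for every $\sigma\in(0,1)$, $$\mathbb{E}\exp(\sigma^2X^2/2)\le\mathbb{E}\exp(\sigma^2Z^2/2)=\frac{1}{\sqrt{1-\sigma^2}}.$$ Furthermore, the sub-gaussian norm $\alpha(n):=\|x\|_{\psi_2}$ satisfies $\alpha(n)\le\sqrt{8}/\sqrt{3}$ and $\alpha(n)\to\sqrt{8}/\sqrt{3}$ as $n\to\infty$.
   Context: For a real random variable $Y$, $\|Y\|_{\psi_2}=\inf\{t>0:\mathbb{E}\exp(Y^2/t^2)\le2\}$; for a random vector $X\in\mathbb{R}^n$, $\|X\|_{\psi_2}=\sup_{u\in S^{n-1}}\|\langle X,u\rangle\|_{\psi_2}$, where $S^{n-1}$ is the unit sphere in $\mathbb{R}^n$. *)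

From HB Require Import structures.
From mathcomp Require Import all_boot all_order all_algebra.
From mathcomp Require Import all_classical all_reals all_analysis.
Set Implicit Arguments. Unset Strict Implicit. Unset Printing Implicit Defensive.
Import Order.TTheory GRing.Theory Num.Theory.
Local Open Scope ring_scope.
Local Open Scope classical_set_scope.

(* A realization of the Bernoulli vector x = (x_1,...,x_n): a sign pattern
   s : {ffun 'I_n -> bool}, with x_i = +1 if s i and -1 otherwise.  Since
   the x_i are i.i.d. symmetric Bernoulli, x is uniformly distributed on
   the 2^n sign patterns. *)
Definition sgn {R : pzRingType} (b : bool) : R := if b then 1 else -1.

Definition bern_E {R : realType} (n : nat) (f : {ffun 'I_n -> bool} -> R) : R :=
  (2 ^+ n)^-1 * \sum_(s : {ffun 'I_n -> bool}) f s.

Definition bern_dot {R : realType} (n : nat) (u : 'rV[R]_n)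
  (s : {ffun 'I_n -> bool}) : R := \sum_(i < n) u 0 i * sgn (s i).

Definition unit_sphere {R : realType} (n : nat) : set 'rV[R]_n :=
  [set u | \sum_(i < n) u 0 i ^+ 2 = 1].

Definition bern_psi2 {R : realType} (n : nat) (Y : {ffun 'I_n -> bool} -> R) : R :=
  inf [set t : R | 0 < t /\ bern_E (fun s => expR (Y s ^+ 2 / t ^+ 2)) <= 2].

Definition alpha {R : realType} (n : nat) : R :=
  sup [set bern_psi2 (bern_dot u) | u in @unit_sphere R n].

Definition gauss_E {R : realType} (g : R -> R) : \bar R :=
  (\int[normal_prob 0 1]_x (g x)%:E)%E.

From mathcomp Require Import all_boot all_order all_algebra.
From mathcomp Require Import all_classical all_reals all_analysis.
From mathcomp Require Import measurable_realfun.
From mathcomp Require Import ring lra zify.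
Import Order.TTheory GRing.Theory Num.Theory.
Import numFieldTopology.Exports.
Local Open Scope ring_scope.
Local Open Scope classical_set_scope.

(* Writing [exp(y^2/2) = E exp(y Z)] and averaging over the signs first turns
   [E exp(a^2 <u,x>^2 / 2)] into [E_Z prod_i cosh(a Z u_i)], and
   [cosh y <= exp(y^2/2)] bounds it by [E exp(a^2 Z^2 / 2) = (1 - a^2)^(-1/2)]
   because [|u| = 1].  For [a^2 = 3/4] this is [2], so every [<u,x>] has
   [psi_2]-norm at most [sqrt(8/3)].  Conversely, along [u = (1,...,1)/sqrt n]
   the integrand is [cosh(a Z / sqrt n)^n >= (1 + a^2 Z^2 / 2n)^n], which tends
   to [exp(a^2 Z^2 / 2)]; by monotone convergence [E exp(<u,x>^2 / t^2)] tends
   to [(1 - 2/t^2)^(-1/2) > 2] for [t < sqrt(8/3)], so [alpha n >= t]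
   eventually. *)

Section normal_integrals.
Context {R : realType}.
Local Open Scope ereal_scope.
Notation mu := (@lebesgue_measure R).

Lemma ge0_integral_normal_prob (m s : R) (F : R -> \bar R) :
  (forall x, 0 <= F x) -> measurable_fun [set: R] F ->
  \int[normal_prob m s]_x F x = \int[mu]_x (F x * (normal_pdf m s x)%:E).
Proof.
move=> F0 mF.
have numu := @normal_prob_dominates R m s.
rewrite -(Radon_Nikodym_SigmaFinite.change_of_variables numu F0 measurableT mF).
have intf := Radon_Nikodym_SigmaFinite.f_integrable numu.
have mpdf : measurable_fun [set: R] (EFin \o normal_pdf m s).
  by apply/measurable_EFinP; exact: measurable_normal_pdf.
apply: ae_eq_integral => //.
- by apply: emeasurable_funM => //; exact: measurable_int intf.
- exact: emeasurable_funM.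
apply: ae_eqe_mul2l; apply: integral_ae_eq => // E _ mE.
by rewrite -Radon_Nikodym_SigmaFinite.f_integral.
Qed.

Lemma normal_pdf_expR (m s x : R) : s != 0%R ->
  normal_pdf m s x = (normal_peak s * expR (- (x - m) ^+ 2 / (s ^+ 2 *+ 2)))%R.
Proof. by move=> s0; rewrite /normal_pdf (negbTE s0). Qed.

Lemma integral_normal_prob_pdf_scale (m0 s0 m s K : R) (f : R -> R) :
  (forall x, 0 <= f x)%R -> measurable_fun [set: R] f ->
  (forall x, f x * normal_pdf m0 s0 x = K * normal_pdf m s x)%R ->
  \int[normal_prob m0 s0]_x (f x)%:E = K%:E.
Proof.
move=> f0 mf fK.
rewrite ge0_integral_normal_prob; last 2 first.
- by move=> x; rewrite lee_fin.
- exact/measurable_EFinP.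
under eq_integral do rewrite -EFinM fK EFinM.
rewrite integralZl //=; last exact: integrable_normal_pdf.
by rewrite integral_normal_pdf mule1.
Qed.

(* Completing the square: [e^(ax) phi(x) = e^(a^2/2) phi(x - a)]. *)
Lemma normal_mgf (a : R) :
  \int[normal_prob 0 1]_x (expR (a * x))%:E = (expR (a ^+ 2 / 2))%:E.
Proof.
apply: (integral_normal_prob_pdf_scale 0 1 a 1) => [x||x].
- exact: expR_ge0.
- by apply: measurableT_comp => //; exact: measurable_funM.
rewrite !normal_pdf_expR ?oner_eq0// expr1n mulrCA -expRD [RHS]mulrCA -expRD.
by congr (_ * expR _)%R; rewrite subr0; field.
Qed.

(* With [s = (1 - c)^(-1/2)], [e^(c x^2 / 2) phi(x) = s phi_s(x)] where
   [phi_s] is the density of [N(0, s^2)]. *)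
Lemma normal_expR_sqr (c : R) : (c < 1)%R ->
  \int[normal_prob 0 1]_x (expR (c * x ^+ 2 / 2))%:E = ((Num.sqrt (1 - c))^-1)%:E.
Proof.
move=> c1; have c1' : (0 < 1 - c)%R by rewrite subr_gt0.
set s := ((Num.sqrt (1 - c))^-1)%R.
have s0 : (0 < s)%R by rewrite invr_gt0 sqrtr_gt0.
have s2 : (s ^+ 2 = (1 - c)^-1)%R by rewrite exprVn sqr_sqrtr // ltW.
have peak1 : normal_peak 1 = (s * normal_peak s)%R.
  rewrite /normal_peak expr1n mul1r -mulrnAr sqrtrM ?sqr_ge0 // sqrtr_sqr.
  by rewrite gtr0_norm // invfM mulrA divff ?gt_eqF // mul1r.
apply: (integral_normal_prob_pdf_scale 0 1 0 s) => [x||x].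
- exact: expR_ge0.
- apply: measurableT_comp => //.
  by do 2 apply: measurable_funM => //; exact: measurable_funX.
rewrite !normal_pdf_expR ?oner_eq0 ?gt_eqF // expr1n peak1.
rewrite -!mulrA mulrCA [X in (s * X)%R]mulrCA -expRD; congr (_ * (_ * expR _))%R.
by rewrite s2 !subr0; field; rewrite gt_eqF.
Qed.

End normal_integrals.

Lemma fact_double_ge (j : nat) : (2 ^ j * j`! <= (j.*2)`!)%N.
Proof.
elim: j => [//|j IH].
rewrite doubleS !factS expnS -!muln2 in IH *.
nia.
Qed.

Section cosh.
Context {R : realType}.

Definition cosh (y : R) : R := (expR y + expR (- y)) / 2.

Lemma cosh_ge0 (y : R) : 0 <= cosh y.
Proof. by rewrite divr_ge0 // addr_ge0 // expR_ge0. Qed.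

Lemma measurable_cosh : measurable_fun [set: R] cosh.
Proof.
rewrite /cosh; apply: measurable_funM => //.
by apply: measurable_funD => //; apply: measurableT_comp => //.
Qed.

Let cosh_coeff (y : R) (k : nat) : R := exp_coeff y k + exp_coeff (- y) k.

Let cosh_coeff_even (y : R) (j : nat) :
  cosh_coeff y j.*2 = 2 * (y ^+ j.*2 / (j.*2)`!%:R).
Proof.
rewrite /cosh_coeff /exp_coeff /= exprNn -signr_odd odd_double expr0 mul1r.
by rewrite mulr2n mulrDl !mul1r.
Qed.

Let cosh_coeff_odd (y : R) (j : nat) : cosh_coeff y j.*2.+1 = 0.
Proof.
rewrite /cosh_coeff /exp_coeff /= exprNn -signr_odd /= odd_double /= expr1.
by rewrite mulN1r mulNr addrN.
Qed.

Let cosh_coeff_ge0 (y : R) (k : nat) : 0 <= cosh_coeff y k.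
Proof.
rewrite -(odd_double_half k); case: (odd k); first by rewrite add1n cosh_coeff_odd.
rewrite add0n cosh_coeff_even mulr_ge0 // divr_ge0 // exprn_even_ge0 //.
by rewrite odd_double.
Qed.

Let cvg_cosh_series (y : R) :
  (\sum_(0 <= k < N) cosh_coeff y k) @[N --> \oo] --> 2 * cosh y.
Proof.
rewrite /cosh mulrC divfK ?pnatr_eq0 //.
under eq_fun do rewrite big_split.
by apply: cvgD; exact: is_cvg_series_exp_coeff.
Qed.

Let nondecreasing_cosh_series (y : R) :
  nondecreasing_seq (fun N => \sum_(0 <= k < N) cosh_coeff y k).
Proof.
apply/nondecreasing_seqP => N.
by rewrite big_nat_recr //= lerDl.
Qed.

(* Termwise, [y^(2j) / (2j)! <= (y^2/2)^j / j!]. *)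
Lemma cosh_le_expR_sqr (y : R) : cosh y <= expR (y ^+ 2 / 2).
Proof.
rewrite -(ler_pM2l (ltr0Sn _ 1)).
have cvg2exp : (\sum_(0 <= k < N) 2 * exp_coeff (y ^+ 2 / 2) k) @[N --> \oo] -->
    2 * expR (y ^+ 2 / 2).
  under eq_fun do rewrite -mulr_sumr.
  by apply: cvgMr; exact: is_cvg_series_exp_coeff.
apply: (ler_cvg_to (cvg_cosh_series y) cvg2exp); apply: nearW => N.
apply: (@le_trans _ _ (\sum_(0 <= k < N.*2) cosh_coeff y k)).
  rewrite [leRHS](@big_cat_nat _ _ _ N) //=; last by rewrite -addnn leq_addr.
  by rewrite lerDl sumr_ge0.
have -> : \sum_(0 <= k < N.*2) cosh_coeff y k =
    \sum_(0 <= j < N) 2 * (y ^+ j.*2 / (j.*2)`!%:R).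
  elim: N => [|N IH]; first by rewrite !big_geq.
  by rewrite doubleS !big_nat_recr //= IH cosh_coeff_odd addr0 cosh_coeff_even.
apply: ler_sum => j _; rewrite ler_pM2l // /exp_coeff /=.
rewrite exprMn exprVn -exprM mul2n -mulrA -invfM.
apply: ler_wpM2l; first by rewrite exprn_even_ge0 // odd_double.
rewrite lef_pV2 ?posrE ?mulr_gt0 ?exprn_gt0 ?ltr0n ?fact_gt0 //.
by rewrite -natrX -natrM ler_nat fact_double_ge.
Qed.

Lemma cosh_ge1Dsqr (y : R) : 1 + y ^+ 2 / 2 <= cosh y.
Proof.
rewrite -(ler_pM2l (ltr0Sn _ 1)).
have := nondecreasing_cvgn_le (nondecreasing_cosh_series y)
  (cvgP _ (cvg_cosh_series y)) 3.
rewrite (cvg_lim _ (cvg_cosh_series y)) //; apply: le_trans.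
rewrite !big_nat_recr //= big_geq // add0r /cosh_coeff /exp_coeff /=.
rewrite !expr0 !expr1 sqrrN !fact0 (_ : 1`! = 1) // (_ : 2`! = 2) //.
by rewrite le_eqVlt; apply/orP; left; apply/eqP; field.
Qed.

End cosh.

Section bernoulli_vector.
Context {R : realType} {n : nat}.
Implicit Types (u : 'rV[R]_n) (f g : {ffun 'I_n -> bool} -> R).

Lemma bern_E_ler f g : (forall s, f s <= g s) -> bern_E f <= bern_E g.
Proof.
move=> fg; apply: ler_wpM2l; first by rewrite invr_ge0 exprn_ge0.
by apply: ler_sum => s _; exact: fg.
Qed.

Lemma bern_E_expR_dot u (b : R) :
  bern_E (fun s => expR (b * bern_dot u s)) = \prod_(i < n) cosh (b * u 0 i).
Proof.
rewrite /bern_E; under eq_bigr do rewrite /bern_dot mulr_sumr expR_sum.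
rewrite -(bigA_distr_bigA (fun i (c : bool) => expR (b * (u 0 i * sgn c)))).
under eq_bigr do rewrite big_bool /= /sgn mulr1 mulrN1.
rewrite /cosh big_split /= prodr_const card_ord exprVn mulrC.
by under eq_bigr do rewrite mulrN.
Qed.

(* Hubbard-Stratonovich: [exp(y^2/2) = E exp(y Z)] with [y = a <u, x>]; then
   exchange the two expectations. *)
Lemma bern_E_expR_sqr_dot u (a : R) :
  (bern_E (fun s => expR (a ^+ 2 * bern_dot u s ^+ 2 / 2)))%:E =
  (\int[normal_prob 0 1]_z (\prod_(i < n) cosh (z * a * u 0 i))%:E)%E.
Proof.
rewrite /bern_E EFinM -sumEFin.
under eq_bigr => s _ do rewrite -exprMn -normal_mgf.
have mexp s : measurable_fun [set: R] (fun z => (expR (a * bern_dot u s * z))%:E).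
  by apply/measurable_EFinP; exact: measurableT_comp.
rewrite -ge0_integral_sum // -ge0_integralZl //; last 2 first.
- exact: emeasurable_sum.
- by move=> z _; rewrite sume_ge0 // => s _; rewrite lee_fin expR_ge0.
apply: eq_integral => z _.
rewrite sumEFin -EFinM -bern_E_expR_dot; congr (_ * _)%:E.
by apply: eq_bigr => s _; rewrite mulrC mulrA.
Qed.

Lemma bern_E_expR_sqr_dot_le u (a : R) : unit_sphere u ->
  ((bern_E (fun s => expR (a ^+ 2 * bern_dot u s ^+ 2 / 2)))%:E <=
   \int[normal_prob 0 1]_z (expR (a ^+ 2 * z ^+ 2 / 2))%:E)%E.
Proof.
move=> u1; rewrite bern_E_expR_sqr_dot; apply: ge0_le_integral => //.
- by move=> z _; rewrite lee_fin prodr_ge0 // => i _; exact: cosh_ge0.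
- apply/measurable_EFinP; apply: measurable_prod => i _.
  apply: measurableT_comp measurable_cosh _.
  by apply: measurable_funM => //; exact: measurable_funM.
- apply/measurable_EFinP; apply: measurableT_comp => //.
  by do 2 apply: measurable_funM => //; exact: measurable_funX.
move=> z _; rewrite lee_fin.
apply: (@le_trans _ _ (\prod_(i < n) expR ((z * a * u 0 i) ^+ 2 / 2))).
  by apply: ler_prod => i _; rewrite cosh_ge0 cosh_le_expR_sqr.
rewrite -expR_sum; under eq_bigr do rewrite exprMn mulrAC.
by rewrite -mulr_sumr u1 mulr1 exprMn (mulrC (z ^+ 2)).
Qed.

End bernoulli_vector.

Section psi2_norm.
Context {R : realType} {n : nat}.
Implicit Types (Y : {ffun 'I_n -> bool} -> R) (t : R).

Lemma bern_psi2_le Y t : 0 < t ->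
  bern_E (fun s => expR (Y s ^+ 2 / t ^+ 2)) <= 2 -> bern_psi2 Y <= t.
Proof. by move=> t0 Yt; apply: ge_inf => //; exists 0 => r [/ltW]. Qed.

Lemma bern_psi2_ge Y t t' : 0 < t -> 2 < bern_E (fun s => expR (Y s ^+ 2 / t ^+ 2)) ->
  0 < t' -> bern_E (fun s => expR (Y s ^+ 2 / t' ^+ 2)) <= 2 ->
  t <= bern_psi2 Y.
Proof.
move=> t0 Yt t'0 Yt'; apply: lb_le_inf; first by exists t'.
move=> r [r0 Yr]; rewrite leNgt; apply/negP => rt.
suff : bern_E (fun s => expR (Y s ^+ 2 / t ^+ 2)) <= 2 by rewrite leNgt Yt.
apply: le_trans Yr; apply: bern_E_ler => s.
rewrite ler_expR ler_wpM2l ?sqr_ge0 // lef_pV2 ?posrE ?exprn_gt0 //.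
by rewrite lerXn2r ?nnegrE ?ltW.
Qed.

Lemma expR_sqr_div_sqr (y t : R) : 0 < t ->
  expR (y ^+ 2 / t ^+ 2) = expR ((Num.sqrt 2 / t) ^+ 2 * y ^+ 2 / 2).
Proof.
move=> t0; rewrite exprMn exprVn sqr_sqrtr //; congr expR; field.
by rewrite gt_eqF // exprn_gt0.
Qed.

End psi2_norm.

Section alpha_upper_bound.
Context {R : realType}.
Local Notation t0 := (Num.sqrt 8 / Num.sqrt 3 : R).

Lemma sqrt8_div_sqrt3_gt0 : 0 < t0.
Proof. by rewrite divr_gt0 // sqrtr_gt0. Qed.

Lemma sqrt8_div_sqrt3_sqr : t0 ^+ 2 = 8 / 3.
Proof. by rewrite exprMn exprVn !sqr_sqrtr. Qed.

(* [t0] is chosen so that [E exp(X^2 / t0^2) <= E exp(3 Z^2 / 8) = 2]. *)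
Lemma bern_E_expR_dot_t0_le n (u : 'rV[R]_n) : unit_sphere u ->
  bern_E (fun s => expR (bern_dot u s ^+ 2 / t0 ^+ 2)) <= 2.
Proof.
move=> u1; under eq_fun do rewrite expR_sqr_div_sqr ?sqrt8_div_sqrt3_gt0 //.
have a2 : (Num.sqrt 2 / t0) ^+ 2 = 3 / 4.
  by rewrite exprMn exprVn sqr_sqrtr // sqrt8_div_sqrt3_sqr; field.
rewrite -lee_fin; apply: (le_trans (bern_E_expR_sqr_dot_le u _ u1)).
rewrite a2 normal_expR_sqr; last lra.
have -> : 1 - 3 / 4 = (2 ^-1) ^+ 2 :> R by field.
by rewrite sqrtr_sqr ger0_norm ?invrK // invr_ge0.
Qed.

Lemma bern_psi2_dot_le n (u : 'rV[R]_n) : unit_sphere u ->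
  bern_psi2 (bern_dot u) <= t0.
Proof.
by move=> u1; apply: bern_psi2_le sqrt8_div_sqrt3_gt0 _; exact: bern_E_expR_dot_t0_le.
Qed.

Lemma alpha_le n : alpha n <= t0.
Proof.
rewrite /alpha.
have [->|ne] := eqVneq [set bern_psi2 (bern_dot u) | u in @unit_sphere R n] set0.
  by rewrite sup0 ltW // sqrt8_div_sqrt3_gt0.
by apply: ge_sup => [|_ [u u1 <-]]; [exact/set0P | exact: bern_psi2_dot_le].
Qed.

Lemma bern_psi2_dot_le_alpha n (u : 'rV[R]_n) : unit_sphere u ->
  bern_psi2 (bern_dot u) <= alpha n.
Proof.
move=> u1; rewrite /alpha; apply: ub_le_sup; last by exists u.
by exists t0 => _ [v v1 <-]; exact: bern_psi2_dot_le.
Qed.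

End alpha_upper_bound.

Lemma bernoulli_ineq {R : realDomainType} (x : R) (n : nat) :
  -1 <= x -> 1 + n%:R * x <= (1 + x) ^+ n.
Proof.
move=> x1; elim: n => [|n IH]; first by rewrite mul0r addr0 expr0.
have x1' : 0 <= 1 + x by rewrite -lerBlDl sub0r.
have nx2 : 0 <= n%:R * x ^+ 2 by rewrite mulr_ge0 // sqr_ge0.
apply: (@le_trans _ _ ((1 + x) * (1 + n%:R * x))); last by rewrite exprS ler_wpM2l.
rewrite -natr1; nra.
Qed.

Section expR_minorant.
Context {R : realType}.

Lemma expR_mul1Bsqr_le1D (s : R) : -1 <= s -> expR s * (1 - s ^+ 2) <= 1 + s.
Proof.
move=> s1; have s1' : 0 <= 1 + s by rewrite -lerBlDl sub0r.
have -> : 1 + s = (1 + s) * expR s * expR (- s).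
  by rewrite -mulrA expRxMexpNx_1 mulr1.
have -> : expR s * (1 - s ^+ 2) = (1 + s) * expR s * (1 - s) by ring.
by rewrite ler_wpM2l ?mulr_ge0 ?expR_ge0 // expR_ge1Dx.
Qed.

(* Stands in for [(1 + A / (k + 1))^(k + 1)] in the monotone convergence
   argument: it lies below it and is obviously nondecreasing in [k]. *)
Definition expR_minorant (k : nat) (A : R) : R :=
  expR A * Num.max 0 (1 - A ^+ 2 / k.+1%:R).

Lemma expR_minorant_ge0 k A : 0 <= expR_minorant k A.
Proof. by rewrite mulr_ge0 ?expR_ge0 // le_max lexx. Qed.

Lemma measurable_expR_minorant k : measurable_fun [set: R] (expR_minorant k).
Proof.
apply: measurable_funM; first exact: measurable_expR.
apply: measurable_maxr => //; apply: measurable_funB => //.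
by apply: measurable_funM => //; exact: measurable_funX.
Qed.

Lemma expR_minorant_homo A : {homo expR_minorant^~ A : k l / (k <= l)%N >-> k <= l}.
Proof.
move=> k l kl; apply: ler_wpM2l; first exact: expR_ge0.
have : 1 - A ^+ 2 / k.+1%:R <= 1 - A ^+ 2 / l.+1%:R.
  rewrite lerB // ler_wpM2l ?sqr_ge0 //.
  by rewrite lef_pV2 ?posrE ?ltr0n // ler_nat.
by rewrite ge_max !le_max lexx => ->; rewrite orbT.
Qed.

Lemma cvg_expR_minorant A : expR_minorant k A @[k --> \oo] --> expR A.
Proof.
rewrite -[X in _ --> X]mulr1; apply: cvgMr.
have cvg1 : (1 - A ^+ 2 * harmonic k) @[k --> \oo] --> (1 : R).
  rewrite -[X in _ --> X]subr0 -(mulr0 (A ^+ 2)).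
  by apply: cvgB; [exact: cvg_cst | apply: cvgMr; exact: cvg_harmonic].
apply: cvg_trans cvg1; apply: near_eq_cvg; near=> k.
rewrite /harmonic /= max_r // subr_ge0 ler_pdivrMr ?ltr0n // mul1r.
near: k; exists (Num.truncn (A ^+ 2)) => // k /= kA.
by apply/ltW/(lt_le_trans (truncnS_gt _)); rewrite ler_nat.
Unshelve. all: by end_near.
Qed.

(* With [s = A / N]: [e^A (1 - N s^2) <= (e^s (1 - s^2))^N <= (1 + s)^N] by
   Bernoulli's inequality. *)
Lemma expR_minorant_le_pow k A : 0 <= A ->
  expR_minorant k A <= (1 + A / k.+1%:R) ^+ k.+1.
Proof.
move=> A0; set N := k.+1; have N0 : 0 < N%:R :> R by rewrite ltr0n.
set s := A / N%:R; have s0 : 0 <= s by rewrite divr_ge0 // ltW.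
have [neg|pos] := leP (1 - A ^+ 2 / N%:R) 0.
  by rewrite /expR_minorant max_l // mulr0 exprn_ge0 // addr_ge0.
rewrite /expR_minorant (max_r (ltW pos)).
have eA : expR A = expR s ^+ N by rewrite -expRM_natl /s mulrC divfK // gt_eqF.
have A2 : A ^+ 2 / N%:R = N%:R * s ^+ 2 by rewrite /s; field; rewrite gt_eqF.
have s1 : s ^+ 2 <= 1.
  rewrite A2 subr_gt0 in pos; apply/ltW/(le_lt_trans _ pos).
  by rewrite ler_peMl ?sqr_ge0 // ler1n.
rewrite eA A2; apply: (@le_trans _ _ ((expR s * (1 - s ^+ 2)) ^+ N)).
  rewrite (exprMn _ (expR s)); apply: ler_wpM2l; first by rewrite exprn_ge0 ?expR_ge0.
  by rewrite -mulrN; apply: bernoulli_ineq; rewrite lerNl opprK.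
apply: lerXn2r; rewrite ?nnegrE ?mulr_ge0 ?expR_ge0 ?subr_ge0 ?addr_ge0 //.
by apply: expR_mul1Bsqr_le1D; apply: le_trans s0; rewrite lerN10.
Qed.

Lemma expR_minorant_le_cosh_pow k y :
  expR_minorant k (y ^+ 2 / 2) <= cosh (y / Num.sqrt k.+1%:R) ^+ k.+1.
Proof.
have y0 : 0 <= y ^+ 2 / 2 by rewrite divr_ge0 ?sqr_ge0.
apply: (le_trans (expR_minorant_le_pow k _ y0)).
apply: lerXn2r; rewrite ?nnegrE ?cosh_ge0 ?addr_ge0 ?divr_ge0 ?sqr_ge0 //.
apply: le_trans (cosh_ge1Dsqr _); rewrite exprMn exprVn sqr_sqrtr //.
by rewrite le_eqVlt; apply/orP; left; apply/eqP; congr (1 + _); field.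
Qed.

End expR_minorant.

Section flat_vector.
Context {R : realType}.

Definition flat_vec (n : nat) : 'rV[R]_n := \row_(i < n) (Num.sqrt n%:R)^-1.

Lemma flat_vec_sphere k : unit_sphere (flat_vec k.+1).
Proof.
rewrite /unit_sphere /=; under eq_bigr do rewrite mxE.
by rewrite sumr_const card_ord exprVn sqr_sqrtr // -[_ *+ k.+1]mulr_natr mulVf.
Qed.

End flat_vector.

Section alpha_lower_bound.
Context {R : realType}.
Local Open Scope ereal_scope.
Local Notation t0 := ((Num.sqrt 8 / Num.sqrt 3)%R : R).
Local Notation minorant_integral c k :=
  (\int[normal_prob 0 1]_z (expR_minorant k (c * z ^+ 2 / 2))%:E).

Lemma measurable_expR_minorant_sqr (c : R) k :
  measurable_fun [set: R] (fun z => (expR_minorant k (c * z ^+ 2 / 2))%:E).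
Proof.
apply/measurable_EFinP; apply: measurableT_comp; first exact: measurable_expR_minorant.
by do 2 apply: measurable_funM => //; exact: measurable_funX.
Qed.

Lemma nondecreasing_minorant_integral (c : R) :
  nondecreasing_seq (fun k => minorant_integral c k).
Proof.
move=> k l kl; apply: ge0_le_integral => //; do ?exact: measurable_expR_minorant_sqr.
- by move=> z _; rewrite lee_fin expR_minorant_ge0.
- by move=> z _; rewrite lee_fin expR_minorant_homo.
Qed.

Lemma cvg_minorant_integral (c : R) : (c < 1)%R ->
  minorant_integral c k @[k --> \oo] --> ((Num.sqrt (1 - c))^-1)%:E.
Proof.
move=> c1; rewrite -normal_expR_sqr //.
have -> : \int[normal_prob 0 1]_z (expR (c * z ^+ 2 / 2))%:E =
    \int[normal_prob 0 1]_(z in setT)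
      limn (fun k => (expR_minorant k (c * z ^+ 2 / 2))%:E).
  apply: eq_integral => z _; have cvgz := cvg_expR_minorant (c * z ^+ 2 / 2).
  by rewrite (EFin_lim (cvgP _ cvgz)) (cvg_lim _ cvgz).
apply: cvg_monotone_convergence => //.
- by move=> k; exact: measurable_expR_minorant_sqr.
- by move=> k z _; rewrite lee_fin expR_minorant_ge0.
- by move=> z _ k l kl; rewrite lee_fin expR_minorant_homo.
Qed.

Lemma minorant_integral_le_bern_E_flat k (a : R) :
  minorant_integral (a ^+ 2) k <=
  (bern_E (fun s => expR (a ^+ 2 * bern_dot (flat_vec k.+1) s ^+ 2 / 2)))%:E.
Proof.
rewrite bern_E_expR_sqr_dot; apply: ge0_le_integral => //.
- by move=> z _; rewrite lee_fin expR_minorant_ge0.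
- exact: measurable_expR_minorant_sqr.
- apply/measurable_EFinP; apply: measurable_prod => i _.
  apply: measurableT_comp measurable_cosh _.
  by apply: measurable_funM => //; exact: measurable_funM.
move=> z _; rewrite lee_fin.
under eq_bigr do rewrite mxE.
rewrite prodr_const card_ord -[(a ^+ 2 * z ^+ 2)%R]mulrC -exprMn.
exact: expR_minorant_le_cosh_pow.
Qed.

Lemma alpha_ge_eventually (t : R) : (Num.sqrt 2 < t < t0)%R ->
  \forall n \near \oo, (t <= alpha n)%R.
Proof.
case/andP => t2 tt0; have t_gt0 : (0 < t)%R by apply: le_lt_trans t2.
set a := (Num.sqrt 2 / t)%R.
have a2 : (a ^+ 2 = 2 / t ^+ 2)%R by rewrite exprMn exprVn sqr_sqrtr.
have a2_lt1 : (a ^+ 2 < 1)%R.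
  by rewrite a2 ltr_pdivrMr ?exprn_gt0 // mul1r -(sqr_sqrtr (ler0n R 2)) ltrXn2r.
have a2_gt : (3 / 4 < a ^+ 2)%R.
  have : (t ^+ 2 < t0 ^+ 2)%R by rewrite ltrXn2r // ltW.
  by rewrite a2 sqrt8_div_sqrt3_sqr => ?; rewrite ltr_pdivlMr ?exprn_gt0 //; lra.
set L := ((Num.sqrt (1 - a ^+ 2))^-1)%R.
have L_gt2 : (2 < L)%R.
  rewrite -[2%R]invrK ltf_pV2 ?posrE ?invr_gt0 ?sqrtr_gt0 ?subr_gt0 //.
  have -> : (2^-1 = Num.sqrt (2^-1 ^+ 2) :> R)%R by rewrite sqrtr_sqr ger0_norm.
  rewrite ltr_sqrt ?exprn_gt0 // expr2; lra.
have cvgL := cvg_minorant_integral _ a2_lt1.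
have Lmid : ((L + 2) / 2)%:E < limn (fun k => minorant_integral (a ^+ 2) k).
  by rewrite (cvg_lim _ cvgL) // -/L lte_fin; lra.
have [N _ HN] := lte_lim (nondecreasing_minorant_integral _) (cvgP _ cvgL) Lmid.
exists N.+1 => // -[//|k] /= /ltnSE Nk.
have u1 := @flat_vec_sphere R k.
apply: le_trans (bern_psi2_dot_le_alpha _ _ u1).
apply: (bern_psi2_ge _ _ _ t_gt0 _ sqrt8_div_sqrt3_gt0); last first.
  exact: bern_E_expR_dot_t0_le.
under eq_fun do rewrite expR_sqr_div_sqr //.
rewrite -lte_fin; apply: lt_le_trans (minorant_integral_le_bern_E_flat k a).
by apply: lt_le_trans (HN k Nk); rewrite lte_fin; lra.
Qed.

End alpha_lower_bound.

Lemma cvgn_squeeze_below {R : realType} (u : nat -> R) (b l : R) : b < l ->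
  (forall n, u n <= l) -> (forall t, b < t < l -> \forall n \near \oo, t <= u n) ->
  u @ \oo --> l.
Proof.
move=> bl ul ev; apply/cvgrPdist_lt => e e0.
set t := Num.max ((b + l) / 2) (l - e / 2).
have bt : b < t by rewrite lt_max; apply/orP; left; lra.
have tl : t < l by rewrite gt_max; apply/andP; split; lra.
have te : l - e / 2 <= t by rewrite le_max lexx orbT.
apply: filterS (ev t _) => [n tu|]; last by rewrite bt tl.
by rewrite ger0_norm ?subr_ge0 //; lra.
Qed.

Theorem theoremB1 (R : realType) :
  (forall (n : nat) (u : 'rV[R]_n), @unit_sphere R n u ->
     forall sigma : R, 0 < sigma < 1 ->
       ((bern_E (fun s => expR (sigma ^+ 2 * bern_dot u s ^+ 2 / 2)))%:E
          <= gauss_E (fun z => expR (sigma ^+ 2 * z ^+ 2 / 2)))%E /\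
       gauss_E (fun z => expR (sigma ^+ 2 * z ^+ 2 / 2))
          = ((Num.sqrt (1 - sigma ^+ 2))^-1)%:E) /\
  (forall n : nat, @alpha R n <= Num.sqrt 8 / Num.sqrt 3) /\
  ((fun n : nat => @alpha R n) @ \oo --> (Num.sqrt 8 / Num.sqrt 3 : R)).
Proof.
split.
  move=> n u u1 sigma /andP[s0 s1]; split; first exact: bern_E_expR_sqr_dot_le.
  by apply: normal_expR_sqr; rewrite expr_lt1 // ltW.
split; first exact: alpha_le.
have sqrt2_lt_t0 : Num.sqrt 2 < Num.sqrt 8 / Num.sqrt 3 :> R.
  by rewrite ltr_pdivlMr ?sqrtr_gt0 // -sqrtrM // ltr_sqrt //; lra.
apply: (cvgn_squeeze_below _ _ _ sqrt2_lt_t0); first exact: alpha_le.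
exact: alpha_ge_eventually.
Qed.
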